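(* Let $\chi,a,b,\lambda,\mu$ be positive constants with $b>2\chi\mu$. Let $u_0$ be a bounded, uniformly continuous function on $\mathbb{R}$ with $u_0>0$ on $\mathbb{R}$, $\liminf_{x\to-\infty}u_0(x)>0$, $u_0(x)\to0$ as $x\to+\infty$, and such that for some $\xi_0$, $u_0\in C^2([\xi_0,+\infty))$, $u_0'\le0$ on $[\xi_0,+\infty)$ and $u_0''(x)/u_0(x)\to0$ as $x\to+\infty$. Let $(u,v)$ be the nonnegative classical solution of \[ u_t=u_{xx}-\chi(uv_x)_x+u(a-bu),\quad 0=v_{xx}-\lambda v+\mu u,\quad x\in\mathbb{R},\ t>0,\qquad u(x,0)=u_0(x), \] and let $E_\omega(t)=\{x\in\mathbb{R}:u(x,t)=\omega\}$. For any $\epsilon>0$ and $\gamma_1>0$, if $\zeta(t)$ satisfies $u_0(\zeta(t))=\gamma_1e^{-(a+\epsilon)t}$ for all sufficiently large $t$, then for any $\omega\in(0,a/b)$ there is $T_1\ge0$ such that $E_\omega(t)\subseteq(-\infty,\zeta(t)]$ for all $t\ge T_1$.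
   Context: The solution is the unique nonnegative classical solution with $u\in C([0,\infty),C^b_{\rm unif}(\mathbb{R}))\cap C^1((0,\infty),C^b_{\rm unif}(\mathbb{R}))$ (global and bounded in time since $b>\chi\mu$), where $C^b_{\rm unif}(\mathbb{R})$ is the space of bounded uniformly continuous functions with the sup norm. *)

From Stdlib Require Import Reals.
From Coquelicot Require Import Coquelicot.
Open Scope R_scope.

Definition bdd_unif_cont (f : R -> R) : Prop :=
  (exists M, forall x, Rabs (f x) <= M) /\
  (forall eps, 0 < eps -> exists delta, 0 < delta /\
     forall x y, Rabs (x - y) < delta -> Rabs (f x - f y) < eps).

Definition d_x (w : R -> R -> R) (x t : R) : R := Derive (fun y => w y t) x.
Definition d_xx (w : R -> R -> R) (x t : R) : R := Derive (fun y => d_x w y t) x.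
Definition d_t (w : R -> R -> R) (x t : R) : R := Derive (fun s => w x s) t.

(* (u, v) is a nonnegative classical solution of
     u_t = u_xx - chi (u v_x)_x + u (a - b u),  0 = v_xx - lambda v + mu u,
     x in R, t > 0, u(x,0) = u0(x),
   with u in C([0,oo), C^b_unif(R)) /\ C^1((0,oo), C^b_unif(R))
   and v(.,t) bounded (the bounded solution of the elliptic equation). *)
Definition classical_solution (chi a b lambda mu : R) (u0 : R -> R)
    (u v : R -> R -> R) : Prop :=
  (forall x, u x 0 = u0 x) /\
  (forall x t, 0 <= t -> 0 <= u x t /\ 0 <= v x t) /\
  (forall t, 0 <= t -> bdd_unif_cont (fun x => u x t)) /\
  (forall t, 0 < t -> exists M, forall x, Rabs (v x t) <= M) /\
  (forall t, 0 <= t -> forall eps, 0 < eps -> exists delta, 0 < delta /\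
     forall s, 0 <= s -> Rabs (s - t) < delta ->
       forall x, Rabs (u x s - u x t) < eps) /\
  (forall t, 0 < t ->
     (forall x, ex_derive (fun s => u x s) t) /\
     bdd_unif_cont (fun x => d_t u x t) /\
     (forall eps, 0 < eps -> exists delta, 0 < delta /\
        forall h, h <> 0 -> Rabs h < delta -> 0 < t + h ->
          forall x, Rabs ((u x (t + h) - u x t) / h - d_t u x t) <= eps) /\
     (forall eps, 0 < eps -> exists delta, 0 < delta /\
        forall s, 0 < s -> Rabs (s - t) < delta ->
          forall x, Rabs (d_t u x s - d_t u x t) < eps)) /\
  (forall x t, 0 < t ->
     ex_derive (fun y => u y t) x /\
     ex_derive (fun y => d_x u y t) x /\
     ex_derive (fun y => v y t) x /\
     ex_derive (fun y => d_x v y t) x /\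
     ex_derive (fun y => u y t * d_x v y t) x /\
     d_t u x t = d_xx u x t
                 - chi * Derive (fun y => u y t * d_x v y t) x
                 + u x t * (a - b * u x t) /\
     0 = d_xx v x t - lambda * v x t + mu * u x t).

Definition level_set (u : R -> R -> R) (omega t : R) : R -> Prop :=
  fun x => u x t = omega.

From Stdlib Require Import Reals Lra Classical.
From Coquelicot Require Import Coquelicot.
Open Scope R_scope.

(* A chain of comparison arguments.  As v = (lambda - d_xx)^{-1} (mu u), a
   maximum principle and the interpolation |w'| <= 2 sup|w| + sup|w''| bound
   |v_x| by a multiple of sup u, so wherever |v_x| <= C,
     u_t <= u_xx + chi C |u_x| + u (a - (b - chi mu) u).
   Comparison with a constant gives u <= M := max (sup u0, a / (b - chi mu)).
   Since u0''/u0 -> 0 and u0' <= 0, also u0'/u0 -> 0, so for X large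
   K e^{(a + eps/2) t} u0(x) is a supersolution on [X, oo) and bounds u there.
   If u(x,t) = omega with x > zeta(t) >= X, monotonicity of u0 then gives
   omega <= K gamma1 e^{- eps t / 2}, impossible for large t.
   Each comparison is run on a bounded strip against a barrier
   delta e^{beta t} psi(x), psi = cosh or exp, which forces a first touching
   point to lie inside the strip. *)

Lemma le_0_of_lt_pos_mul (z c : R) :
  0 < c -> (forall delta, 0 < delta -> z < delta * c) -> z <= 0.
Proof.
  intros Hc H. apply Rnot_lt_le; intro Hz.
  specialize (H (z / c) (Rdiv_lt_0_compat _ _ Hz Hc)).
  replace (z / c * c) with z in H by (field; lra). lra.
Qed.

Lemma exp_ge_1 (x : R) : 0 <= x -> 1 <= exp x.
Proof. intro Hx. pose proof (exp_ineq1_le x). lra. Qed.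

Lemma exp_decay_eventually_lt (A c m : R) :
  0 < c -> 0 < m -> exists T, 0 <= T /\ forall t, T <= t -> A * exp (- c * t) < m.
Proof.
  intros Hc Hm. exists (Rmax 0 (A / (m * c))). split; [apply Rmax_l|]. intros t Ht.
  pose proof (Rmax_l 0 (A / (m * c))). pose proof (Rmax_r 0 (A / (m * c))).
  assert (HA : A <= m * (c * t)).
  { replace A with (m * c * (A / (m * c))) by (field; lra).
    rewrite <- Rmult_assoc. apply Rmult_le_compat_l; nra. }
  pose proof (exp_ineq1_le (c * t)) as Hexp. pose proof (exp_pos (c * t)).
  replace (- c * t) with (- (c * t)) by ring. rewrite exp_Ropp.
  apply (Rmult_lt_reg_r (exp (c * t))); [lra|].
  rewrite Rmult_assoc, Rinv_l by lra. nra.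
Qed.

Lemma continuity_pt_of_is_derive (f : R -> R) (x l : R) :
  is_derive f x l -> continuity_pt f x.
Proof. intro H. apply derivable_continuous_pt. exists l. now apply is_derive_Reals. Qed.

Lemma continuity_pt_of_bdd_unif_cont (f : R -> R) (x : R) :
  bdd_unif_cont f -> continuity_pt f x.
Proof.
  intros [_ H] e He. destruct (H e He) as [d [Hd Hdd]].
  exists d. split; [exact Hd|]. intros y [_ Hy]. now apply Hdd.
Qed.

Lemma nonincr_of_derive_nonpos (f f' : R -> R) (a : R) :
  (forall x, a <= x -> is_derive f x (f' x)) -> (forall x, a <= x -> f' x <= 0) ->
  forall x y, a <= x -> x <= y -> f y <= f x.
Proof.
  intros Hd Hn x y Hx [Hxy|Hxy]; [|rewrite Hxy; lra].
  destruct (MVT_cor2 f f' x y) as [c [Hc Hcxy]]; [exact Hxy| |].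
  { intros c Hc. apply is_derive_Reals, Hd. lra. }
  assert (f' c * (y - x) <= 0) by (apply Rmult_le_0_r; [apply Hn|]; lra).
  lra.
Qed.

Lemma derive_neg_earlier_gt (g : R -> R) (t l : R) :
  0 < t -> is_derive g t l -> l < 0 -> exists s, 0 <= s < t /\ g t < g s.
Proof.
  intros Ht Hd Hl. apply is_derive_Reals in Hd.
  destruct (Hd (- l) ltac:(lra)) as [[d Hd0] Hdd]; simpl in Hdd.
  set (h := Rmin d t / 2).
  assert (Hh : 0 < h < d /\ h < t).
  { pose proof (Rmin_l d t). pose proof (Rmin_r d t).
    pose proof (Rmin_pos d t Hd0 Ht). unfold h. lra. }
  exists (t - h). split; [lra|].
  specialize (Hdd (- h) ltac:(lra) ltac:(rewrite Rabs_left; lra)).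
  replace (t + - h) with (t - h) in Hdd by ring.
  apply Rabs_lt_between in Hdd.
  assert (Hq : g (t - h) - g t = - ((g (t - h) - g t) / - h) * h) by (field; lra).
  assert (0 < - ((g (t - h) - g t) / - h) * h) by (apply Rmult_lt_0_compat; lra).
  lra.
Qed.

(* If f'' > 0, then f' > 0 just to the right of x (as f' x = 0), so f increases there. *)
Lemma local_max_derive (f f' : R -> R) (x r f'' : R) :
  0 < r ->
  (forall y, Rabs (y - x) < r -> is_derive f y (f' y)) -> is_derive f' x f'' ->
  (forall y, Rabs (y - x) < r -> f y <= f x) ->
  f' x = 0 /\ f'' <= 0.
Proof.
  intros Hr Hd Hd2 Hmax.
  assert (Hcrit : f' x = 0).
  { assert (Hl : derivable_pt_lim f x (f' x)).
    { apply is_derive_Reals, Hd. rewrite Rminus_diag, Rabs_R0; lra. }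
    change (f' x) with (derive_pt f x (exist _ (f' x) Hl)).
    apply (deriv_maximum f (x - r) (x + r)); try lra.
    intros y Hy1 Hy2. apply Hmax, Rabs_lt_between'. lra. }
  split; [exact Hcrit|]. apply Rnot_lt_le; intro Hpos.
  apply is_derive_Reals in Hd2.
  destruct (Hd2 f'' Hpos) as [[d Hd0] Hdd]; simpl in Hdd.
  set (h := Rmin d r / 2).
  assert (Hh : 0 < h < d /\ h < r).
  { pose proof (Rmin_l d r). pose proof (Rmin_r d r).
    pose proof (Rmin_pos d r Hd0 Hr). unfold h. lra. }
  destruct (MVT_cor2 f f' x (x + h)) as [c [Hmvt Hc]]; [lra| |].
  { intros c Hc. apply is_derive_Reals, Hd, Rabs_lt_between'. lra. }
  assert (Hf'c : 0 < f' c).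
  { specialize (Hdd (c - x) ltac:(lra) ltac:(rewrite Rabs_right; lra)).
    replace (x + (c - x)) with c in Hdd by ring. rewrite Hcrit in Hdd.
    apply Rabs_lt_between in Hdd.
    replace (f' c) with ((f' c - 0) / (c - x) * (c - x)) by (field; lra).
    apply Rmult_lt_0_compat; lra. }
  assert (f (x + h) <= f x) by (apply Hmax, Rabs_lt_between'; lra).
  assert (0 < f' c * (x + h - x)) by (apply Rmult_lt_0_compat; lra).
  lra.
Qed.

Lemma real_induction (P : R -> Prop) (T : R) :
  0 <= T -> P 0 ->
  (forall c, 0 < c <= T -> (forall s, 0 <= s < c -> P s) -> P c) ->
  (forall c, 0 <= c < T -> P c ->
     exists d, 0 < d /\ forall s, c < s < c + d -> s <= T -> P s) ->
  forall t, 0 <= t <= T -> P t.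
Proof.
  intros HT H0 Hclosed Hopen.
  set (A := fun y => 0 <= y <= T /\ forall s, 0 <= s <= y -> P s).
  assert (HA0 : A 0).
  { split; [lra|]. intros s Hs. now replace s with 0 by lra. }
  destruct (completeness A) as [c [Hub Hlub]].
  { exists T. intros y [Hy _]. lra. }
  { exists 0. exact HA0. }
  assert (Hc0 : 0 <= c) by (apply Hub, HA0).
  assert (HcT : c <= T) by (apply Hlub; intros y [Hy _]; lra).
  assert (Hbelow : forall s, 0 <= s < c -> P s).
  { intros s Hs. apply NNPP; intro Hns.
    assert (c <= s); [|lra].
    apply Hlub. intros y [_ Hy]. apply Rnot_lt_le; intro Hsy.
    apply Hns, Hy. lra. }
  assert (Hc : P c).
  { destruct (Req_dec c 0) as [->|]; [exact H0|]. apply Hclosed; [lra|exact Hbelow]. }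
  assert (Hupto : forall s, 0 <= s <= c -> P s).
  { intros s Hs. destruct (Req_dec s c) as [->|]; [exact Hc|]. apply Hbelow. lra. }
  destruct (Req_dec c T) as [<-|HcT']; [exact Hupto|].
  destruct (Hopen c ltac:(lra) Hc) as [d [Hd Hstep]].
  pose proof (Rmin_l T (c + d / 2)). pose proof (Rmin_r T (c + d / 2)).
  set (c' := Rmin T (c + d / 2)) in *.
  assert (Hcc' : c < c') by (apply Rmin_glb_lt; lra).
  assert (HAc' : A c').
  { split; [lra|]. intros s Hs.
    destruct (Rle_or_lt s c); [apply Hupto; lra | apply Hstep; lra]. }
  pose proof (Hub c' HAc'). lra.
Qed.

Lemma is_derive_cosh (x : R) : is_derive cosh x (sinh x).
Proof. apply is_derive_Reals, derivable_pt_lim_cosh. Qed.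

Lemma is_derive_sinh (x : R) : is_derive sinh x (cosh x).
Proof. apply is_derive_Reals, derivable_pt_lim_sinh. Qed.

Lemma cosh_pos (x : R) : 0 < cosh x.
Proof. unfold cosh. pose proof (exp_pos x). pose proof (exp_pos (- x)). lra. Qed.

Lemma Rabs_sinh_le_cosh (x : R) : Rabs (sinh x) <= cosh x.
Proof.
  unfold sinh, cosh. pose proof (exp_pos x). pose proof (exp_pos (- x)).
  apply Rabs_le. lra.
Qed.

Lemma cosh_ge_abs (x : R) : 1 + Rabs x <= 2 * cosh x.
Proof.
  unfold cosh. pose proof (exp_pos x). pose proof (exp_pos (- x)).
  destruct (Rle_or_lt 0 x).
  - rewrite Rabs_right by lra. pose proof (exp_ineq1_le x). lra.
  - rewrite Rabs_left by lra. pose proof (exp_ineq1_le (- x)). lra.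
Qed.

Lemma cosh_barrier_gt (A delta g y : R) :
  0 < delta -> 1 <= g -> 2 * A / delta < Rabs y -> A < delta * g * cosh y.
Proof.
  intros Hdelta Hg Hy.
  apply (Rmult_lt_compat_l delta) in Hy; [|lra].
  replace (delta * (2 * A / delta)) with (2 * A) in Hy by (field; lra).
  pose proof (cosh_ge_abs y). pose proof (Rmult_lt_0_compat _ _ Hdelta (cosh_pos y)). nra.
Qed.

Lemma exp_barrier_gt (A delta g y : R) :
  0 < delta -> 1 <= g -> A / delta < y -> A < delta * g * exp y.
Proof.
  intros Hdelta Hg Hy.
  apply (Rmult_lt_compat_l delta) in Hy; [|lra].
  replace (delta * (A / delta)) with A in Hy by (field; lra).
  pose proof (exp_ineq1_le y). pose proof (Rmult_lt_0_compat _ _ Hdelta (exp_pos y)). nra.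
Qed.

Lemma is_derive_cosh_scal (s x : R) : is_derive (fun y => cosh (s * y)) x (s * sinh (s * x)).
Proof. unfold cosh, sinh. auto_derive; [exact I|field]. Qed.

Lemma is_derive_sinh_scal (s x : R) : is_derive (fun y => sinh (s * y)) x (s * cosh (s * x)).
Proof. unfold cosh, sinh. auto_derive; [exact I|field]. Qed.

Lemma is_derive_Rminus (f g : R -> R) (x df dg : R) :
  is_derive f x df -> is_derive g x dg -> is_derive (fun y => f y - g y) x (df - dg).
Proof. intros Hf Hg. exact (is_derive_minus f g x df dg Hf Hg). Qed.

Lemma is_derive_minus_const (f : R -> R) (c x df : R) :
  is_derive f x df -> is_derive (fun y => f y - c) x df.
Proof.
  intro H. replace df with (df - 0) by ring.
  apply is_derive_Rminus; [exact H | exact (is_derive_const c x)].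
Qed.

Lemma interior_max_of_far_below (Z : R -> R) (x0 R0 c : R) :
  (forall y, continuity_pt Z y) -> c < Z x0 -> Rabs x0 < R0 ->
  (forall y, R0 <= Rabs y -> Z y < c) ->
  exists xm r, c < Z xm /\ 0 < r /\ forall y, Rabs (y - xm) < r -> Z y <= Z xm.
Proof.
  intros Hcont Hx0 HR0 Hfar.
  destruct (continuity_ab_maj Z (- R0) R0) as [xm [Hmax Hxm]].
  { pose proof (Rabs_pos x0). lra. }
  { intros y _. apply Hcont. }
  assert (HZxm : c < Z xm) by (pose proof (Hmax x0 ltac:(apply Rabs_le_between; lra)); lra).
  assert (Hint : Rabs xm < R0) by (apply Rnot_le_lt; intro H; pose proof (Hfar xm H); lra).
  exists xm, (R0 - Rabs xm). split; [exact HZxm|]. split; [lra|].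
  intros y Hy. apply Hmax, Rabs_le_between.
  pose proof (Rabs_triang (y - xm) xm). replace (y - xm + xm) with y in * by ring. lra.
Qed.

(* Compare w with mu B / lambda + delta cosh (s x), where s^2 < lambda: the
   perturbation forces the difference to attain an interior maximum. *)
Lemma elliptic_max_principle (w w' w'' f : R -> R) (lambda mu B V : R) :
  0 < lambda -> 0 < mu -> (forall x, Rabs (w x) <= V) ->
  (forall x, is_derive w x (w' x)) -> (forall x, is_derive w' x (w'' x)) ->
  (forall x, w'' x = lambda * w x - mu * f x) -> (forall x, f x <= B) ->
  forall x, w x <= mu * B / lambda.
Proof.
  intros Hl Hm HV Hw' Hw'' Heq Hf x0. apply Rnot_lt_le; intro Hx0.
  set (c := mu * B / lambda) in *.
  set (s := Rmin 1 (lambda / 2)).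
  assert (Hs : 0 < s /\ s * s < lambda).
  { pose proof (Rmin_l 1 (lambda / 2)). pose proof (Rmin_r 1 (lambda / 2)).
    pose proof (Rmin_pos 1 (lambda / 2) ltac:(lra) ltac:(lra)). unfold s. nra. }
  set (delta := (w x0 - c) / (2 * cosh (s * x0))).
  assert (Hdelta : 0 < delta).
  { apply Rdiv_lt_0_compat; [lra|]. pose proof (cosh_pos (s * x0)). lra. }
  set (Z := fun y => w y - delta * cosh (s * y)).
  assert (HZx0 : c < Z x0).
  { unfold Z, delta. pose proof (cosh_pos (s * x0)). field_simplify; [|lra].
    apply (Rmult_lt_reg_r 2); [lra|]. field_simplify. lra. }
  set (R0 := (2 * (V + Rabs c) / delta + 1) / s + Rabs x0).
  assert (HR0 : 2 * (V + Rabs c) / delta < s * R0 /\ Rabs x0 < R0).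
  { assert (0 <= 2 * (V + Rabs c) / delta).
    { apply Rdiv_le_0_compat; [|lra]. pose proof (HV 0). pose proof (Rabs_pos (w 0)).
      pose proof (Rabs_pos c). lra. }
    assert (0 < (2 * (V + Rabs c) / delta + 1) / s) by (apply Rdiv_lt_0_compat; lra).
    pose proof (Rabs_pos x0). unfold R0. split; [|lra].
    replace (s * ((2 * (V + Rabs c) / delta + 1) / s + Rabs x0))
      with (2 * (V + Rabs c) / delta + 1 + s * Rabs x0) by (field; lra). nra. }
  assert (Hfar : forall y, R0 <= Rabs y -> Z y < c).
  { intros y Hy. unfold Z.
    pose proof (HV y) as Hwy. apply Rabs_le_between in Hwy.
    pose proof (Rle_abs (- c)) as Hc. rewrite Rabs_Ropp in Hc.
    enough (V + Rabs c < delta * 1 * cosh (s * y)) by lra.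
    apply cosh_barrier_gt; [lra | lra |].
    rewrite Rabs_mult, (Rabs_right s) by lra. nra. }
  assert (HdZ : forall y, is_derive Z y (w' y - delta * (s * sinh (s * y)))).
  { intro y. apply is_derive_Rminus; [apply Hw'|]. apply is_derive_scal, is_derive_cosh_scal. }
  assert (HdZ' : forall y, is_derive (fun y => w' y - delta * (s * sinh (s * y))) y
                             (w'' y - delta * (s * (s * cosh (s * y))))).
  { intro y. apply is_derive_Rminus; [apply Hw''|].
    apply is_derive_scal, is_derive_scal, is_derive_sinh_scal. }
  destruct (interior_max_of_far_below Z x0 R0 c
              (fun y => continuity_pt_of_is_derive _ _ _ (HdZ y)) HZx0 (proj2 HR0) Hfar)
    as [xm [r [HZxm [Hr Hmax]]]].
  destruct (local_max_derive Z _ xm r _ Hr (fun y _ => HdZ y) (HdZ' xm) Hmax) as [_ Hconcave].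
  rewrite Heq in Hconcave. unfold Z in HZxm.
  pose proof (Hf xm). pose proof (cosh_pos (s * xm)).
  assert (lambda * c = mu * B) by (unfold c; field; lra).
  assert (0 < delta * cosh (s * xm) * (lambda - s * s)) by (apply Rmult_lt_0_compat; nra).
  nra.
Qed.

Lemma derive_interpolation (w w' w'' : R -> R) (V W : R) :
  (forall x, Rabs (w x) <= V) -> (forall x, is_derive w x (w' x)) ->
  (forall x, is_derive w' x (w'' x)) -> (forall x, Rabs (w'' x) <= W) ->
  forall x, Rabs (w' x) <= 2 * V + W.
Proof.
  intros HV Hw' Hw'' HW x.
  destruct (MVT_cor2 w w' x (x + 1)) as [c [Hc Hxc]]; [lra| |].
  { intros c _. apply is_derive_Reals, Hw'. }
  destruct (MVT_cor2 w' w'' x c) as [d [Hd Hxd]]; [lra| |].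
  { intros d _. apply is_derive_Reals, Hw''. }
  replace (x + 1 - x) with 1 in Hc by ring.
  pose proof (HV x) as Hx. pose proof (HV (x + 1)) as Hx1. pose proof (HW d) as Hwd.
  apply Rabs_le_between in Hx, Hx1, Hwd.
  assert (- W <= w'' d * (c - x) <= W) by (split; nra).
  apply Rabs_le. lra.
Qed.

(* (f' + k f) e^{-k x} is nonincreasing; once f' + k f < 0 it stays below a
   negative constant, and f would then become negative. *)
Lemma derive_ge_of_second_derive_le (f f' f'' : R -> R) (x0 k : R) :
  0 < k ->
  (forall x, x0 <= x -> is_derive f x (f' x)) ->
  (forall x, x0 <= x -> is_derive f' x (f'' x)) ->
  (forall x, x0 <= x -> f'' x <= k * k * f x) -> (forall x, 0 < f x) ->
  forall x, x0 <= x -> - k * f x <= f' x.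
Proof.
  intros Hk Hf' Hf'' Hf2 Hpos x1 Hx1. apply Rnot_lt_le; intro Hbad.
  set (y1 := f' x1 + k * f x1).
  assert (Hy1 : y1 < 0) by (unfold y1; lra).
  set (g := fun x => (f' x + k * f x) * exp (- k * x)).
  assert (Hg : forall x, x1 <= x ->
            is_derive g x ((f'' x + k * f' x - k * (f' x + k * f x)) * exp (- k * x))).
  { intros x Hx. unfold g.
    pose proof (Hf' x ltac:(lra)) as Ha. pose proof (Hf'' x ltac:(lra)) as Hb.
    auto_derive.
    - repeat split; [eexists; exact Hb | eexists; exact Ha].
    - change (Derive (fun z => f z) x) with (Derive f x).
      change (Derive (fun z => f' z) x) with (Derive f' x).
      rewrite (is_derive_unique _ _ _ Ha), (is_derive_unique _ _ _ Hb). ring. }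
  assert (Hslope : forall x, x1 <= x -> f' x <= y1).
  { intros x Hx.
    assert (Hgx : g x <= g x1).
    { apply (nonincr_of_derive_nonpos g _ x1 Hg); try lra.
      intros z Hz. apply Rmult_le_0_r; [|left; apply exp_pos].
      pose proof (Hf2 z ltac:(lra)). lra. }
    unfold g in Hgx. fold y1 in Hgx.
    replace (- k * x1) with (- k * x + k * (x - x1)) in Hgx by ring.
    rewrite exp_plus in Hgx.
    pose proof (exp_pos (- k * x)). pose proof (exp_ge_1 (k * (x - x1)) ltac:(nra)).
    assert (f' x + k * f x <= y1 * exp (k * (x - x1))).
    { apply (Rmult_le_reg_r (exp (- k * x))); [lra|]. nra. }
    pose proof (Hpos x). nra. }
  set (xb := x1 + f x1 / (- y1) + 1).
  assert (Hq : 0 <= f x1 / (- y1)) by (apply Rdiv_le_0_compat; [left; apply Hpos | lra]).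
  assert (Hlin : f xb - y1 * xb <= f x1 - y1 * x1).
  { apply (nonincr_of_derive_nonpos (fun x => f x - y1 * x) (fun x => f' x - y1) x1);
      try (unfold xb; lra).
    - intros x Hx. apply is_derive_Rminus; [apply Hf'; lra|].
      auto_derive; [exact I|ring].
    - intros x Hx. pose proof (Hslope x Hx). lra. }
  assert (y1 * (xb - x1) = - f x1 + y1) by (unfold xb; field; lra).
  pose proof (Hpos xb). nra.
Qed.

Lemma tail_derivatives_small (f : R -> R) (xi c eta : R) :
  0 <= c -> 0 < eta -> (forall x, 0 < f x) ->
  (forall x, xi <= x -> ex_derive f x /\ ex_derive (Derive f) x) ->
  (forall x, xi <= x -> Derive f x <= 0) ->
  is_lim (fun x => Derive_n f 2 x / f x) p_infty 0 ->
  exists X, xi <= X /\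
    forall x, X <= x -> Derive (Derive f) x + c * Rabs (Derive f x) <= eta * f x.
Proof.
  intros Hc Heta Hpos Hreg Hdecr Hlim.
  set (k := eta / (2 * (c + 1))).
  assert (Hk : 0 < k /\ c * k <= eta / 2).
  { unfold k. split; [apply Rdiv_lt_0_compat; lra|].
    apply (Rmult_le_reg_r (2 * (c + 1))); [lra|]. field_simplify; nra. }
  set (sigma := Rmin (k * k) (eta / 2)).
  assert (Hsigma : 0 < sigma /\ sigma <= k * k /\ sigma <= eta / 2).
  { split; [apply Rmin_pos; nra | split; [apply Rmin_l | apply Rmin_r]]. }
  apply is_lim_spec in Hlim.
  destruct (Hlim (mkposreal sigma (proj1 Hsigma))) as [X1 HX1]; simpl in HX1.
  set (X := Rmax xi X1 + 1).
  assert (HX : xi <= X /\ X1 < X).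
  { pose proof (Rmax_l xi X1). pose proof (Rmax_r xi X1). unfold X. lra. }
  assert (Hf'' : forall x, X <= x -> Derive (Derive f) x <= sigma * f x).
  { intros x Hx. specialize (HX1 x ltac:(lra)).
    rewrite Rminus_0_r in HX1. apply Rabs_lt_between in HX1.
    change (- sigma < Derive (Derive f) x / f x < sigma) in HX1.
    pose proof (Hpos x).
    replace (Derive (Derive f) x) with (Derive (Derive f) x / f x * f x) by (field; lra).
    apply Rmult_le_compat_r; lra. }
  assert (Hf' : forall x, X <= x -> - k * f x <= Derive f x).
  { apply (derive_ge_of_second_derive_le f (Derive f) (Derive (Derive f)) X k); try tauto.
    - intros x Hx. apply Derive_correct, Hreg. lra.
    - intros x Hx. apply Derive_correct, Hreg. lra.
    - intros x Hx. pose proof (Hf'' x Hx). pose proof (Hpos x). nra. }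
  exists X. split; [lra|]. intros x Hx.
  pose proof (Hf'' x Hx). pose proof (Hf' x Hx). pose proof (Hdecr x ltac:(lra)).
  pose proof (Hpos x).
  rewrite Rabs_left1 by lra.
  assert (sigma * f x <= eta / 2 * f x) by (apply Rmult_le_compat_r; lra).
  assert (c * - Derive f x <= c * k * f x) by nra.
  assert (c * k * f x <= eta / 2 * f x) by (apply Rmult_le_compat_r; lra).
  lra.
Qed.

Lemma pos_lower_bound_left (f : R -> R) (X : R) :
  (forall x, continuity_pt f x) -> (forall x, 0 < f x) ->
  (exists delta M, 0 < delta /\ forall x, x <= M -> delta <= f x) ->
  exists m, 0 < m /\ forall x, x <= X -> m <= f x.
Proof.
  intros Hcont Hpos [delta [M [Hdelta HM]]].
  destruct (continuity_ab_min f (Rmin M X) X (Rmin_r M X) (fun y _ => Hcont y))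
    as [xm [Hmin _]].
  exists (Rmin delta (f xm)). split; [apply Rmin_pos; [lra|apply Hpos]|].
  intros x Hx. destruct (Rle_or_lt x M).
  - pose proof (HM x ltac:(lra)). pose proof (Rmin_l delta (f xm)). lra.
  - pose proof (Rmin_l M X). pose proof (Hmin x ltac:(lra)).
    pose proof (Rmin_r delta (f xm)). lra.
Qed.

Lemma eventually_ge_of_decay (f zeta : R -> R) (X gamma c T0 : R) :
  0 < c -> (forall x, continuity_pt f x) -> (forall x, 0 < f x) ->
  (exists delta M, 0 < delta /\ forall x, x <= M -> delta <= f x) ->
  (forall t, T0 <= t -> f (zeta t) = gamma * exp (- c * t)) ->
  exists T, T0 <= T /\ forall t, T <= t -> X <= zeta t.
Proof.
  intros Hc Hcont Hpos Hliminf Hzeta.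
  destruct (pos_lower_bound_left f X Hcont Hpos Hliminf) as [m [Hm Hleft]].
  destruct (exp_decay_eventually_lt gamma c m Hc Hm) as [T [_ HT]].
  pose proof (Rmax_l T0 T). pose proof (Rmax_r T0 T).
  exists (Rmax T0 T). split; [lra|]. intros t Ht. apply Rnot_lt_le; intro Hlt.
  pose proof (Hleft (zeta t) ltac:(lra)) as Hlow. rewrite Hzeta in Hlow by lra.
  pose proof (HT t ltac:(lra)). lra.
Qed.

Definition time_equicontinuous (Z : R -> R -> R) (D : R -> Prop) (T : R) : Prop :=
  forall t, 0 <= t <= T -> forall eps, 0 < eps -> exists delta, 0 < delta /\
    forall s, 0 <= s <= T -> Rabs (s - t) < delta ->
      forall y, D y -> Rabs (Z y s - Z y t) < eps.

Lemma time_equicontinuous_sub_mul (Z : R -> R -> R) (g h : R -> R) (D : R -> Prop) (T K : R) :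
  time_equicontinuous Z D T -> (forall t, continuity_pt g t) ->
  (forall y, D y -> Rabs (h y) <= K) ->
  time_equicontinuous (fun y s => Z y s - g s * h y) D T.
Proof.
  intros HZ Hg Hh t Ht eps Heps.
  set (K' := Rabs K + 1).
  assert (HK' : 0 < K') by (unfold K'; pose proof (Rabs_pos K); lra).
  destruct (HZ t Ht (eps / 2) ltac:(lra)) as [d1 [Hd1 HZd]].
  destruct (Hg t (eps / 2 / K') ltac:(apply Rdiv_lt_0_compat; lra)) as [d2 [Hd2 Hgd]].
  exists (Rmin d1 d2). split; [apply Rmin_pos; lra|].
  intros s Hs Hst y Hy.
  pose proof (Rmin_l d1 d2). pose proof (Rmin_r d1 d2).
  assert (HZs : Rabs (Z y s - Z y t) < eps / 2) by (apply HZd; auto; lra).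
  assert (Hgs : Rabs (g s - g t) <= eps / 2 / K').
  { destruct (Req_dec s t) as [->|Hne].
    - rewrite Rminus_diag, Rabs_R0. left. apply Rdiv_lt_0_compat; lra.
    - left. apply Hgd. split; [split; [exact I|auto]|]. simpl. unfold R_dist. lra. }
  assert (Hhy : Rabs (h y) <= K').
  { pose proof (Hh y Hy). pose proof (Rle_abs K). unfold K'. lra. }
  replace (Z y s - g s * h y - (Z y t - g t * h y))
    with ((Z y s - Z y t) - (g s - g t) * h y) by ring.
  eapply Rle_lt_trans; [apply Rabs_triang|]. rewrite Rabs_Ropp, Rabs_mult.
  assert (Rabs (g s - g t) * Rabs (h y) <= eps / 2 / K' * K')
    by (apply Rmult_le_compat; auto using Rabs_pos).
  replace (eps / 2 / K' * K') with (eps / 2) in * by (field; lra).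
  lra.
Qed.

Lemma bounded_on_time_interval (Z : R -> R -> R) (T : R) :
  0 <= T -> (forall t, 0 <= t <= T -> exists B, forall y, Rabs (Z y t) <= B) ->
  time_equicontinuous Z (fun _ => True) T ->
  exists B, forall t y, 0 <= t <= T -> Rabs (Z y t) <= B.
Proof.
  intros HT Hbdd Hcont.
  set (P := fun c => exists B, forall s y, 0 <= s <= c -> Rabs (Z y s) <= B).
  assert (Hnear : forall c, 0 <= c <= T -> exists d, 0 < d /\
            exists B, forall s y, 0 <= s <= T -> Rabs (s - c) < d -> Rabs (Z y s) <= B).
  { intros c Hc. destruct (Hcont c Hc 1 ltac:(lra)) as [d [Hd Hdd]].
    destruct (Hbdd c Hc) as [Bc HBc]. exists d. split; [exact Hd|]. exists (Bc + 1).
    intros s y Hs Hsc. specialize (Hdd s Hs Hsc y I). pose proof (HBc y).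
    pose proof (Rabs_triang (Z y s - Z y c) (Z y c)).
    replace (Z y s - Z y c + Z y c) with (Z y s) in * by ring. lra. }
  assert (HPT : P T).
  { apply (real_induction P T HT); [| | | lra].
    - destruct (Hbdd 0 ltac:(lra)) as [B HB]. exists B. intros s y Hs.
      now replace s with 0 by lra.
    - intros c Hc Hbelow. destruct (Hnear c ltac:(lra)) as [d [Hd [B1 HB1]]].
      pose proof (Rmax_l 0 (c - d / 2)). pose proof (Rmax_r 0 (c - d / 2)).
      set (c' := Rmax 0 (c - d / 2)) in *.
      assert (Hc' : c' < c) by (apply Rmax_lub_lt; lra).
      destruct (Hbelow c' ltac:(lra)) as [B2 HB2]. exists (Rmax B1 B2).
      intros s y Hs. destruct (Rle_or_lt s c').
      + eapply Rle_trans; [apply HB2; lra | apply Rmax_r].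
      + eapply Rle_trans; [apply HB1; [lra | apply Rabs_lt_between'; lra] | apply Rmax_l].
    - intros c Hc [B2 HB2]. destruct (Hnear c ltac:(lra)) as [d [Hd [B1 HB1]]].
      exists d. split; [exact Hd|]. intros s Hs HsT. exists (Rmax B1 B2).
      intros s' y Hs'. destruct (Rle_or_lt s' c).
      + eapply Rle_trans; [apply HB2; lra | apply Rmax_r].
      + eapply Rle_trans; [apply HB1; [lra | apply Rabs_lt_between'; lra] | apply Rmax_l]. }
  destruct HPT as [B HB]. exists B. intros t y Ht. now apply HB.
Qed.

Lemma negative_on_strip (Z : R -> R -> R) (lo hi T : R) :
  lo < hi -> 0 <= T ->
  (forall t y, 0 <= t <= T -> lo <= y <= hi -> continuity_pt (fun z => Z z t) y) ->
  time_equicontinuous Z (fun y => lo <= y <= hi) T ->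
  (forall y, lo <= y <= hi -> Z y 0 < 0) ->
  (forall t, 0 <= t <= T -> Z lo t < 0 /\ Z hi t < 0) ->
  (forall t y, 0 < t <= T -> lo < y < hi -> Z y t = 0 ->
     (forall z, lo <= z <= hi -> Z z t <= 0) -> exists s, 0 <= s < t /\ 0 < Z y s) ->
  forall t y, 0 <= t <= T -> lo <= y <= hi -> Z y t < 0.
Proof.
  intros Hlh HT Hcont Hequi Hinit Hbdry Htouch t y Ht.
  revert y. apply (real_induction (fun s => forall y, lo <= y <= hi -> Z y s < 0) T HT);
    [exact Hinit | | | exact Ht].
  - intros c Hc Hbelow.
    assert (Hle : forall y, lo <= y <= hi -> Z y c <= 0).
    { intros y Hy. apply Rnot_lt_le; intro Hpos.
      destruct (Hequi c ltac:(lra) (Z y c) Hpos) as [d [Hd Hdd]].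
      pose proof (Rmin_l d c). pose proof (Rmin_r d c). pose proof (Rmin_pos d c Hd ltac:(lra)).
      set (s := c - Rmin d c / 2) in *.
      specialize (Hdd s ltac:(unfold s; lra) ltac:(apply Rabs_lt_between'; unfold s; lra) y Hy).
      apply Rabs_lt_between' in Hdd.
      pose proof (Hbelow s ltac:(unfold s; lra) y Hy). lra. }
    destruct (continuity_ab_maj (fun z => Z z c) lo hi ltac:(lra)
                (fun z Hz => Hcont c z ltac:(lra) Hz)) as [xm [Hmax Hxm]].
    destruct (Rlt_or_le (Z xm c) 0) as [Hneg|Hzero].
    { intros y Hy. pose proof (Hmax y Hy). lra. }
    exfalso.
    assert (HZxm : Z xm c = 0) by (pose proof (Hle xm Hxm); lra).
    assert (Hint : lo < xm < hi).
    { destruct (Hbdry c ltac:(lra)). destruct Hxm as [[Hl|Hl] [Hh|Hh]]; subst; lra. }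
    destruct (Htouch c xm ltac:(lra) Hint HZxm Hle) as [s [Hs HZs]].
    pose proof (Hbelow s Hs xm Hxm). lra.
  - intros c Hc Hneg.
    destruct (continuity_ab_maj (fun z => Z z c) lo hi ltac:(lra)
                (fun z Hz => Hcont c z ltac:(lra) Hz)) as [xm [Hmax Hxm]].
    pose proof (Hneg xm Hxm) as Hm.
    destruct (Hequi c ltac:(lra) (- Z xm c) ltac:(lra)) as [d [Hd Hdd]].
    exists d. split; [exact Hd|]. intros s Hs HsT y Hy.
    specialize (Hdd s ltac:(lra) ltac:(apply Rabs_lt_between'; lra) y Hy).
    apply Rabs_lt_between' in Hdd. pose proof (Hmax y Hy). lra.
Qed.

(* D is u minus a supersolution.  At a first point where D touches the barrier
   delta e^{beta t} psi, the last hypothesis makes D minus the barrier strictly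
   decreasing in time, although it was negative just before. *)
Lemma comparison_on_strip (D Dx Dxx Dt : R -> R -> R) (psi psi' psi'' : R -> R)
    (delta beta lo hi T : R) :
  lo < hi -> 0 <= T -> 0 < delta ->
  (forall y, is_derive psi y (psi' y)) -> (forall y, is_derive psi' y (psi'' y)) ->
  (forall y, 0 < psi y) ->
  (forall t y, 0 <= t <= T -> lo <= y <= hi -> continuity_pt (fun z => D z t) y) ->
  time_equicontinuous D (fun y => lo <= y <= hi) T ->
  (forall y, lo <= y <= hi -> D y 0 <= 0) ->
  (forall t, 0 <= t <= T ->
     D lo t < delta * exp (beta * t) * psi lo /\ D hi t < delta * exp (beta * t) * psi hi) ->
  (forall t y, 0 < t <= T -> lo < y < hi ->
     is_derive (fun z => D z t) y (Dx y t) /\ is_derive (fun z => Dx z t) y (Dxx y t) /\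
     is_derive (fun s => D y s) t (Dt y t)) ->
  (forall t y, 0 < t <= T -> lo < y < hi ->
     D y t = delta * exp (beta * t) * psi y -> Dx y t = delta * exp (beta * t) * psi' y ->
     Dxx y t <= delta * exp (beta * t) * psi'' y ->
     Dt y t < beta * (delta * exp (beta * t)) * psi y) ->
  forall t y, 0 <= t <= T -> lo <= y <= hi -> D y t < delta * exp (beta * t) * psi y.
Proof.
  intros Hlh HT Hdelta Hpsi' Hpsi'' Hpsi Hcont Hequi Hinit Hbdry Hder Htouch t y Ht Hy.
  set (Z := fun z s => D z s - delta * exp (beta * s) * psi z).
  enough (Z y t < 0) by (unfold Z in *; lra).
  apply (negative_on_strip Z lo hi T Hlh HT); try assumption.
  - intros s z Hs Hz. apply continuity_pt_minus; [now apply Hcont|].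
    apply continuity_pt_scal, (continuity_pt_of_is_derive _ _ _ (Hpsi' z)).
  - destruct (continuity_ab_maj psi lo hi ltac:(lra)
                (fun z _ => continuity_pt_of_is_derive _ _ _ (Hpsi' z))) as [xM [HxM _]].
    apply (time_equicontinuous_sub_mul D (fun s => delta * exp (beta * s)) psi _ T (psi xM));
      [exact Hequi | |].
    + intro s. apply (continuity_pt_of_is_derive _ _ (delta * (beta * exp (beta * s)))).
      auto_derive; [exact I | ring].
    + intros z Hz. rewrite Rabs_right by (left; apply Hpsi). now apply HxM.
  - intros z Hz. unfold Z. rewrite Rmult_0_r, exp_0, Rmult_1_r.
    pose proof (Hinit z Hz). pose proof (Hpsi z). nra.
  - intros s Hs. unfold Z. destruct (Hbdry s Hs). lra.
  - intros t1 x1 Ht1 Hx1 HZ1 Hmax.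
    set (G := delta * exp (beta * t1)).
    destruct (Hder t1 x1 Ht1 Hx1) as (_ & HDxx & HDt).
    destruct (local_max_derive (fun z => Z z t1) (fun z => Dx z t1 - G * psi' z) x1
                (Rmin (x1 - lo) (hi - x1)) (Dxx x1 t1 - G * psi'' x1))
      as [Hcrit Hconcave].
    + apply Rmin_pos; lra.
    + intros z Hz. pose proof (Rmin_l (x1 - lo) (hi - x1)). pose proof (Rmin_r (x1 - lo) (hi - x1)).
      apply Rabs_lt_between' in Hz.
      apply is_derive_Rminus; [apply Hder; lra | apply is_derive_scal, Hpsi'].
    + apply is_derive_Rminus; [exact HDxx | apply is_derive_scal, Hpsi''].
    + intros z Hz. pose proof (Rmin_l (x1 - lo) (hi - x1)). pose proof (Rmin_r (x1 - lo) (hi - x1)).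
      apply Rabs_lt_between' in Hz. simpl. rewrite HZ1. apply Hmax. lra.
    + assert (Hdec : Dt x1 t1 < beta * G * psi x1).
      { unfold Z in HZ1. fold G in HZ1. apply Htouch; fold G; lra. }
      destruct (derive_neg_earlier_gt (fun s => Z x1 s) t1 (Dt x1 t1 - beta * G * psi x1))
        as [s [Hs HZs]]; [lra | | lra |].
      * apply is_derive_Rminus; [exact HDt|].
        auto_derive; [exact I | unfold G; ring].
      * exists s. split; [exact Hs | lra].
Qed.

Section Solution.

Variables (chi a b lambda mu : R) (u0 : R -> R) (u v : R -> R -> R).
Hypothesis Hsol : classical_solution chi a b lambda mu u0 u v.
Hypotheses (Ha : 0 < a) (Hchi : 0 < chi) (Hlambda : 0 < lambda) (Hmu : 0 < mu).
Hypothesis Hchimu : chi * mu < b.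

Lemma u_init (x : R) : u x 0 = u0 x.
Proof. now apply Hsol. Qed.

Lemma u_nonneg (x t : R) : 0 <= t -> 0 <= u x t.
Proof. intro Ht. now apply Hsol. Qed.

Lemma u_continuous_x (t y : R) : 0 <= t -> continuity_pt (fun z => u z t) y.
Proof. intro Ht. apply continuity_pt_of_bdd_unif_cont. now apply Hsol. Qed.

Lemma u0_continuous (y : R) : continuity_pt u0 y.
Proof. apply (continuity_pt_ext (fun z => u z 0)); [exact u_init | apply u_continuous_x; lra]. Qed.

Lemma u0_bounded : exists M0, forall x, u0 x <= M0.
Proof.
  destruct Hsol as (_ & _ & Hbdd & _). destruct (Hbdd 0 ltac:(lra)) as [[M0 HM0] _].
  exists M0. intro x. rewrite <- u_init. pose proof (HM0 x) as H. simpl in H.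
  pose proof (Rle_abs (u x 0)). lra.
Qed.

Lemma u_time_equicontinuous (D : R -> Prop) (T : R) : time_equicontinuous u D T.
Proof.
  intros t Ht eps Heps. destruct Hsol as (_ & _ & _ & _ & Hc & _).
  destruct (Hc t ltac:(lra) eps Heps) as [d [Hd Hdd]].
  exists d. split; [exact Hd|]. intros s Hs Hst y _. apply Hdd; lra.
Qed.

Lemma u_bounded_up_to (T : R) : 0 <= T -> exists B, forall t x, 0 <= t <= T -> Rabs (u x t) <= B.
Proof.
  intro HT. apply bounded_on_time_interval; [exact HT | | apply u_time_equicontinuous].
  intros t Ht. destruct Hsol as (_ & _ & Hbdd & _). now apply Hbdd.
Qed.

Lemma u_derivatives (x t : R) : 0 < t ->
  is_derive (fun y => u y t) x (d_x u x t) /\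
  is_derive (fun y => d_x u y t) x (d_xx u x t) /\
  is_derive (fun s => u x s) t (d_t u x t).
Proof.
  intro Ht. destruct Hsol as (_ & _ & _ & _ & _ & Hdt & Hpde).
  destruct (Hpde x t Ht) as (Hux & Huxx & _).
  destruct (Hdt t Ht) as [Hut _].
  split; [|split]; now apply Derive_correct.
Qed.

Lemma grad_v_bound (t B : R) : 0 < t -> (forall x, u x t <= B) ->
  forall x, Rabs (d_x v x t) <= 2 * mu * B / lambda + 2 * mu * B.
Proof.
  intros Ht HB. destruct Hsol as (_ & Hnn & _ & Hvbdd & _ & _ & Hpde).
  assert (Hv' : forall y, is_derive (fun z => v z t) y (d_x v y t))
    by (intro y; apply Derive_correct, (Hpde y t Ht)).
  assert (Hv'' : forall y, is_derive (fun z => d_x v z t) y (d_xx v y t))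
    by (intro y; apply Derive_correct, (Hpde y t Ht)).
  assert (Hell : forall y, d_xx v y t = lambda * v y t - mu * u y t)
    by (intro y; destruct (Hpde y t Ht) as (_ & _ & _ & _ & _ & _ & E); lra).
  destruct (Hvbdd t Ht) as [V HV].
  pose proof (elliptic_max_principle _ _ _ _ lambda mu B V Hlambda Hmu HV Hv' Hv'' Hell HB)
    as Hvmax.
  assert (Hv : forall y, Rabs (v y t) <= mu * B / lambda).
  { intro y. destruct (Hnn y t ltac:(lra)). rewrite Rabs_right by lra. apply Hvmax. }
  intro x. replace (2 * mu * B / lambda + 2 * mu * B)
    with (2 * (mu * B / lambda) + (lambda * (mu * B / lambda) + mu * B)) by (field; lra).
  apply (derive_interpolation _ _ _ _ _ Hv Hv' Hv''). intro y.
  rewrite Hell. destruct (Hnn y t ltac:(lra)) as [Hu _].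
  pose proof (HB y). pose proof (Hv y) as Hvy. apply Rabs_le_between in Hvy.
  apply Rabs_le. split; nra.
Qed.

Lemma grad_v_bounded_up_to (T : R) : 0 <= T ->
  exists C, 0 <= C /\ forall t y, 0 < t <= T -> Rabs (d_x v y t) <= C.
Proof.
  intro HT. destruct (u_bounded_up_to T HT) as [B HB].
  assert (HB0 : 0 <= B) by (pose proof (HB 0 0 ltac:(lra)); pose proof (Rabs_pos (u 0 0)); lra).
  exists (2 * mu * B / lambda + 2 * mu * B). split.
  - assert (0 <= 2 * mu * B / lambda) by (apply Rdiv_le_0_compat; nra). nra.
  - intros t y Ht. apply grad_v_bound; [lra|]. intro z.
    pose proof (HB t z ltac:(lra)). pose proof (Rle_abs (u z t)). lra.
Qed.

(* Expand (u v_x)_x and use v_xx = lambda v - mu u; the term -chi lambda u v is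
   dropped since u, v >= 0. *)
Lemma u_differential_inequality (x t C : R) : 0 < t -> Rabs (d_x v x t) <= C ->
  d_t u x t <= d_xx u x t + chi * C * Rabs (d_x u x t) + u x t * (a - (b - chi * mu) * u x t).
Proof.
  intros Ht HC. destruct Hsol as (_ & Hnn & _ & _ & _ & _ & Hpde).
  destruct (Hpde x t Ht) as (Hux & _ & _ & Hvx & _ & Hu & Hv).
  rewrite Derive_mult in Hu by assumption.
  change (Derive (fun y => u y t) x) with (d_x u x t) in Hu.
  change (Derive (fun y => d_x v y t) x) with (d_xx v x t) in Hu.
  destruct (Hnn x t ltac:(lra)) as [Hu0 Hv0].
  assert (Hcross : - (d_x u x t * d_x v x t) <= Rabs (d_x u x t) * C).
  { pose proof (Rle_abs (- (d_x u x t * d_x v x t))) as H.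
    rewrite Rabs_Ropp, Rabs_mult in H.
    pose proof (Rmult_le_compat_l _ _ _ (Rabs_pos (d_x u x t)) HC). lra. }
  assert (0 <= lambda * (u x t * v x t)) by (apply Rmult_le_pos; [lra | nra]).
  rewrite Hu. nra.
Qed.

Lemma const_supersolution_touching (t y C M G : R) :
  0 < t -> 0 <= C -> Rabs (d_x v y t) <= C -> a / (b - chi * mu) <= M -> 0 < G ->
  u y t - M = G * cosh y -> d_x u y t = G * sinh y -> d_xx u y t <= G * cosh y ->
  d_t u y t < (2 + chi * C) * G * cosh y.
Proof.
  intros Ht HC HvC HM HG Hu Hux Huxx.
  pose proof (u_differential_inequality y t C Ht HvC) as Hineq.
  pose proof (u_nonneg y t ltac:(lra)). pose proof (cosh_pos y).
  assert (Hreact : u y t * (a - (b - chi * mu) * u y t) <= 0).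
  { assert (a <= (b - chi * mu) * u y t).
    { replace a with ((b - chi * mu) * (a / (b - chi * mu))) by (field; lra).
      apply Rmult_le_compat_l; nra. }
    nra. }
  assert (Hdrift : chi * C * Rabs (d_x u y t) <= chi * C * (G * cosh y)).
  { apply Rmult_le_compat_l; [nra|]. rewrite Hux, Rabs_mult, (Rabs_right G) by lra.
    apply Rmult_le_compat_l; [lra | apply Rabs_sinh_le_cosh]. }
  nra.
Qed.

Lemma u_le_max (M : R) : (forall x, u0 x <= M) -> a / (b - chi * mu) <= M ->
  forall x t, 0 <= t -> u x t <= M.
Proof.
  intros Hu0 HM x0 t0 Ht0.
  destruct (u_bounded_up_to t0 Ht0) as [B HB].
  destruct (grad_v_bounded_up_to t0 Ht0) as [C [HC HvC]].
  set (beta := 2 + chi * C).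
  assert (Hbeta : 0 < beta) by (unfold beta; nra).
  apply Rminus_le, (le_0_of_lt_pos_mul _ (exp (beta * t0) * cosh x0)).
  { apply Rmult_lt_0_compat; [apply exp_pos | apply cosh_pos]. }
  intros delta Hdelta. rewrite <- Rmult_assoc.
  set (R0 := 2 * (B + Rabs M) / delta + Rabs x0 + 1).
  assert (HR0 : Rabs x0 < R0 /\ 2 * (B + Rabs M) / delta < R0).
  { assert (0 <= 2 * (B + Rabs M) / delta); [|pose proof (Rabs_pos x0); unfold R0; lra].
    pose proof (HB 0 0 ltac:(lra)). pose proof (Rabs_pos (u 0 0)). pose proof (Rabs_pos M).
    apply Rdiv_le_0_compat; lra. }
  assert (Hfar : forall t y, 0 <= t <= t0 -> Rabs y = R0 ->
            u y t - M < delta * exp (beta * t) * cosh y).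
  { intros t y Ht Hy. apply Rle_lt_trans with (B + Rabs M).
    - pose proof (HB t y Ht). pose proof (Rle_abs (u y t)). pose proof (Rle_abs (- M)) as HM'.
      rewrite Rabs_Ropp in HM'. lra.
    - apply cosh_barrier_gt; [lra | apply exp_ge_1, Rmult_le_pos | ]; lra. }
  apply (comparison_on_strip (fun y s => u y s - M) (d_x u) (d_xx u) (d_t u)
           cosh sinh cosh delta beta (- R0) R0 t0);
    try solve [auto using is_derive_cosh, is_derive_sinh, cosh_pos | pose proof (Rabs_pos x0); lra].
  - intros t y Ht _. apply continuity_pt_minus; [apply u_continuous_x; lra|].
    apply continuity_pt_const. now intros ? ?.
  - intros t Ht eps Heps.
    destruct (u_time_equicontinuous (fun y => - R0 <= y <= R0) t0 t Ht eps Heps) as [d [Hd Hdd]].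
    exists d. split; [exact Hd|]. intros s Hs Hst y Hy.
    replace (u y s - M - (u y t - M)) with (u y s - u y t) by ring. now apply Hdd.
  - intros y _. rewrite u_init. pose proof (Hu0 y). lra.
  - assert (Habs : Rabs R0 = R0) by (apply Rabs_right; pose proof (Rabs_pos x0); lra).
    intros t Ht. split; apply Hfar; rewrite ?Rabs_Ropp; assumption.
  - intros t y Ht _. destruct (u_derivatives y t ltac:(lra)) as (H1 & H2 & H3).
    split; [|split]; [exact (is_derive_minus_const _ M _ _ H1) | exact H2 |
                      exact (is_derive_minus_const _ M _ _ H3)].
  - intros t y Ht _ Hu Hux Huxx.
    assert (HG : 0 < delta * exp (beta * t)) by (apply Rmult_lt_0_compat; [lra | apply exp_pos]).
    exact (const_supersolution_touching t y C M _ ltac:(lra) HC (HvC t y Ht) HM HG Hu Hux Huxx).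
  - now apply Rabs_le_between, Rlt_le.
Qed.

Lemma exp_supersolution_touching (t y C eta U G : R) :
  0 < t -> 0 <= C -> Rabs (d_x v y t) <= C -> 0 <= U -> 0 < G ->
  Derive (Derive u0) y + chi * C * Rabs (Derive u0 y) <= eta * u0 y ->
  u y t - U * u0 y = G * exp y -> d_x u y t - U * Derive u0 y = G * exp y ->
  d_xx u y t - U * Derive (Derive u0) y <= G * exp y ->
  d_t u y t - (a + eta) * U * u0 y < (2 + chi * C + a) * G * exp y.
Proof.
  intros Ht HC HvC HU HG Htail Hu Hux Huxx.
  pose proof (u_differential_inequality y t C Ht HvC) as Hineq.
  pose proof (u_nonneg y t ltac:(lra)). pose proof (exp_pos y).
  assert (Hreact : u y t * (a - (b - chi * mu) * u y t) <= a * u y t).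
  { assert (0 <= (b - chi * mu) * (u y t * u y t)) by (apply Rmult_le_pos; nra). nra. }
  assert (Hdrift : chi * C * Rabs (d_x u y t) <= chi * C * (U * Rabs (Derive u0 y) + G * exp y)).
  { apply Rmult_le_compat_l; [nra|].
    replace (d_x u y t) with (U * Derive u0 y + G * exp y) by lra.
    eapply Rle_trans; [apply Rabs_triang|].
    rewrite !Rabs_mult, (Rabs_right U), (Rabs_right G), (Rabs_right (exp y)) by lra. lra. }
  assert (Hsuper : U * (Derive (Derive u0) y + chi * C * Rabs (Derive u0 y)) <= U * (eta * u0 y))
    by (apply Rmult_le_compat_l; lra).
  assert (0 < G * exp y) by (apply Rmult_lt_0_compat; lra).
  nra.
Qed.

Lemma u_sub_mul_u0_derivatives (K k t y : R) :
  0 < t -> ex_derive u0 y -> ex_derive (Derive u0) y ->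
  is_derive (fun z => u z t - K * exp (k * t) * u0 z) y
    (d_x u y t - K * exp (k * t) * Derive u0 y) /\
  is_derive (fun z => d_x u z t - K * exp (k * t) * Derive u0 z) y
    (d_xx u y t - K * exp (k * t) * Derive (Derive u0) y) /\
  is_derive (fun s => u y s - K * exp (k * s) * u0 y) t
    (d_t u y t - K * (k * exp (k * t)) * u0 y).
Proof.
  intros Ht Hd1 Hd2. destruct (u_derivatives y t Ht) as (H1 & H2 & H3).
  split; [|split]; apply is_derive_Rminus; try assumption.
  - apply is_derive_scal, Derive_correct, Hd1.
  - apply is_derive_scal, Derive_correct, Hd2.
  - auto_derive; [exact I | ring].
Qed.

Lemma u_le_exp_mul_u0 (M C X K eta : R) :
  (forall x t, 0 <= t -> u x t <= M) ->
  0 <= C -> (forall x t, 0 < t -> Rabs (d_x v x t) <= C) ->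
  (forall x, X <= x -> ex_derive u0 x /\ ex_derive (Derive u0) x) ->
  (forall x, X <= x -> Derive (Derive u0) x + chi * C * Rabs (Derive u0 x) <= eta * u0 x) ->
  (forall x, 0 < u0 x) -> 0 <= eta -> 1 <= K -> M <= K * u0 X ->
  forall x t, X <= x -> 0 <= t -> u x t <= K * exp ((a + eta) * t) * u0 x.
Proof.
  intros HM HC HvC Hreg Htail Hpos Heta HK HKX x0 t0 Hx0 Ht0.
  set (k := a + eta). set (beta := 2 + chi * C + a).
  assert (Hu0M : forall y, Rabs (u0 y) <= M).
  { intro y. rewrite Rabs_right by (left; apply Hpos). rewrite <- u_init. apply HM. lra. }
  apply Rminus_le, (le_0_of_lt_pos_mul _ (exp (beta * t0) * exp x0)).
  { apply Rmult_lt_0_compat; apply exp_pos. }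
  intros delta Hdelta. rewrite <- Rmult_assoc.
  set (R0 := M / delta + Rabs x0 + Rabs X + 1).
  assert (HR0 : M / delta < R0 /\ x0 < R0 /\ X < R0).
  { pose proof (Hu0M 0). pose proof (Rabs_pos (u0 0)). pose proof (Rle_abs x0).
    pose proof (Rle_abs X). pose proof (Rabs_pos x0). pose proof (Rabs_pos X).
    assert (0 <= M / delta) by (apply Rdiv_le_0_compat; lra). unfold R0. lra. }
  assert (HU : forall t, 0 <= t -> K <= K * exp (k * t)).
  { intros t Ht. pose proof (exp_ge_1 (k * t) ltac:(apply Rmult_le_pos; unfold k; lra)). nra. }
  apply (comparison_on_strip (fun y s => u y s - K * exp (k * s) * u0 y)
           (fun y s => d_x u y s - K * exp (k * s) * Derive u0 y)
           (fun y s => d_xx u y s - K * exp (k * s) * Derive (Derive u0) y)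
           (fun y s => d_t u y s - K * (k * exp (k * s)) * u0 y)
           exp exp exp delta beta X R0 t0);
    try solve [lra | exact is_derive_exp | exact exp_pos].
  - intros t y Ht _. apply continuity_pt_minus; [apply u_continuous_x; lra|].
    apply continuity_pt_scal, u0_continuous.
  - apply (time_equicontinuous_sub_mul u (fun s => K * exp (k * s)) u0 _ t0 M);
      [apply u_time_equicontinuous | | intros; apply Hu0M].
    intro s. apply (continuity_pt_of_is_derive _ _ (K * (k * exp (k * s)))).
    auto_derive; [exact I | ring].
  - intros y _. rewrite u_init, Rmult_0_r, exp_0. pose proof (Hpos y). nra.
  - intros t Ht. split.
    + pose proof (HM X t ltac:(lra)). pose proof (HU t ltac:(lra)). pose proof (Hpos X).
      assert (0 < delta * exp (beta * t) * exp X)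
        by (apply Rmult_lt_0_compat; [apply Rmult_lt_0_compat|]; auto using exp_pos).
      nra.
    + apply Rle_lt_trans with M.
      * pose proof (HM R0 t ltac:(lra)). pose proof (HU t ltac:(lra)). pose proof (Hpos R0). nra.
      * apply exp_barrier_gt; [lra | apply exp_ge_1, Rmult_le_pos; [unfold beta; nra | lra] | lra].
  - intros t y Ht Hy. destruct (Hreg y ltac:(lra)).
    apply u_sub_mul_u0_derivatives; tauto.
  - intros t y Ht Hy Hu Hux Huxx.
    assert (HG : 0 < delta * exp (beta * t)) by (apply Rmult_lt_0_compat; [lra | apply exp_pos]).
    pose proof (exp_supersolution_touching t y C eta (K * exp (k * t)) _ ltac:(lra) HC
                  (HvC y t ltac:(lra)) ltac:(pose proof (HU t ltac:(lra)); lra) HG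
                  (Htail y ltac:(lra)) Hu Hux Huxx).
    unfold k, beta in *. lra.
Qed.

Lemma u_le_exp_growth (xi0 eta : R) :
  0 < eta -> (forall x, 0 < u0 x) ->
  (forall x, xi0 <= x -> ex_derive u0 x /\ ex_derive (Derive u0) x) ->
  (forall x, xi0 <= x -> Derive u0 x <= 0) ->
  is_lim (fun x => Derive_n u0 2 x / u0 x) p_infty 0 ->
  exists X K, xi0 <= X /\ 0 < K /\
    forall x t, X <= x -> 0 <= t -> u x t <= K * exp ((a + eta) * t) * u0 x.
Proof.
  intros Heta Hpos Hreg Hdecr Hlim.
  destruct u0_bounded as [M0 HM0].
  set (M := Rmax M0 (a / (b - chi * mu))).
  assert (HuM : forall x t, 0 <= t -> u x t <= M).
  { apply u_le_max; [intro x; eapply Rle_trans; [apply HM0 | apply Rmax_l] | apply Rmax_r]. }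
  assert (HM : 0 <= M)
    by (pose proof (u_nonneg 0 0 ltac:(lra)); pose proof (HuM 0 0 ltac:(lra)); lra).
  set (C := 2 * mu * M / lambda + 2 * mu * M).
  assert (HC : 0 <= C)
    by (unfold C; assert (0 <= 2 * mu * M / lambda) by (apply Rdiv_le_0_compat; nra); nra).
  assert (HvC : forall x t, 0 < t -> Rabs (d_x v x t) <= C)
    by (intros x t Ht; apply grad_v_bound; [exact Ht | intro; apply HuM; lra]).
  destruct (tail_derivatives_small u0 xi0 (chi * C) eta ltac:(nra) Heta Hpos Hreg Hdecr Hlim)
    as [X [HX Htail]].
  exists X, (Rmax 1 (M / u0 X)). split; [exact HX|].
  split; [pose proof (Rmax_l 1 (M / u0 X)); lra|].
  apply (u_le_exp_mul_u0 M C); try assumption; try lra; [| apply Rmax_l |].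
  - intros x Hx. apply Hreg. lra.
  - pose proof (Hpos X). pose proof (Rmax_r 1 (M / u0 X)).
    replace M with (M / u0 X * u0 X) at 1 by (field; lra).
    apply Rmult_le_compat_r; lra.
Qed.

End Solution.

Theorem lemma3p1 (chi a b lambda mu : R) (u0 : R -> R) (u v : R -> R -> R) :
  0 < chi -> 0 < a -> 0 < b -> 0 < lambda -> 0 < mu ->
  b > 2 * chi * mu ->
  bdd_unif_cont u0 ->
  (forall x, 0 < u0 x) ->
  (* liminf_{x -> -oo} u0(x) > 0 *)
  (exists delta M, 0 < delta /\ forall x, x <= M -> delta <= u0 x) ->
  is_lim u0 p_infty 0 ->
  (exists xi0,
     (forall x, xi0 <= x -> ex_derive u0 x /\ ex_derive (Derive u0) x
                           /\ continuous (Derive_n u0 2) x) /\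
     (forall x, xi0 <= x -> Derive u0 x <= 0) /\
     is_lim (fun x => Derive_n u0 2 x / u0 x) p_infty 0) ->
  classical_solution chi a b lambda mu u0 u v ->
  forall (eps gamma1 : R) (zeta : R -> R),
    0 < eps -> 0 < gamma1 ->
    (exists T0, forall t, T0 <= t ->
       u0 (zeta t) = gamma1 * exp (- (a + eps) * t)) ->
    forall omega, 0 < omega < a / b ->
      exists T1, 0 <= T1 /\
        forall t, T1 <= t -> forall x, level_set u omega t x -> x <= zeta t.
Proof.
  intros Hchi Ha _ Hlambda Hmu Hb2 _ Hpos Hliminf _ [xi0 [Hreg [Hdecr Hlim]]] Hsol
    eps gamma1 zeta Heps _ [T0 Hzeta] omega [Homega _].
  destruct (u_le_exp_growth chi a b lambda mu u0 u v Hsol Ha Hchi Hlambda Hmu ltac:(nra)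
              xi0 (eps / 2) ltac:(lra) Hpos) as [X [K [HX [HK Hup]]]]; try assumption.
  { intros x Hx. destruct (Hreg x Hx) as (? & ? & _). now split. }
  destruct (eventually_ge_of_decay u0 zeta X gamma1 (a + eps) T0 ltac:(lra)
              (u0_continuous chi a b lambda mu u0 u v Hsol) Hpos Hliminf Hzeta)
    as [T2 [HT02 HT2]].
  destruct (exp_decay_eventually_lt (K * gamma1) (eps / 2) omega ltac:(lra) Homega)
    as [T3 [HT3pos HT3]].
  pose proof (Rmax_l T2 T3). pose proof (Rmax_r T2 T3).
  exists (Rmax T2 T3). split; [lra|]. intros t Ht x Hx.
  pose proof (HT2 t ltac:(lra)) as HzetaX.
  apply Rnot_lt_le; intro Hbeyond.
  assert (Hmono : u0 x <= u0 (zeta t)).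
  { apply (nonincr_of_derive_nonpos u0 (Derive u0) xi0); try lra.
    - intros y Hy. apply Derive_correct, (Hreg y Hy).
    - exact Hdecr. }
  assert (Hrate : K * exp ((a + eps / 2) * t) * (gamma1 * exp (- (a + eps) * t))
                  = K * gamma1 * exp (- (eps / 2) * t)).
  { replace (- (eps / 2) * t) with ((a + eps / 2) * t + - (a + eps) * t) by field.
    rewrite exp_plus. ring. }
  pose proof (Hup x t ltac:(lra) ltac:(lra)) as Hux. unfold level_set in Hx.
  pose proof (Rmult_le_compat_l (K * exp ((a + eps / 2) * t)) _ _
                ltac:(pose proof (exp_pos ((a + eps / 2) * t)); nra) Hmono).
  rewrite Hzeta, Hrate in * by lra. pose proof (HT3 t ltac:(lra)).
  lra.
Qed.
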